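(* Fix $d\in[0,D]$ and consider the convex optimization problem \[ U(d)=\min_{\{E_n\},\{t_n\}} \ \sum_{n=1}^N E_n\left(1+\frac{h_n}{g_n}\right) \] subject to \[ d\le \sum_{n=1}^N t_n W\ln\left(1+\frac{E_n h_n}{t_n\sigma^2 W}\right),\qquad 2\sum_{n=1}^N t_n\le T-\frac{Ld}{f_B},\qquad E_n\ge 0,\ t_n\ge 0\ \ \forall n. \] Let $(\{E_n\},\{t_n\})$ be an optimal solution such that, for each $n$, either $E_n=t_n=0$ or both $E_n>0$ and $t_n>0$. Let $\mathcal P_T=\{n: E_n>0,\ t_n>0\}$, and define $\mathrm{SNR}_n^T=\frac{E_n h_n}{t_n\sigma^2 W}$ for $n\in\mathcal P_T$. Then \[ \mathrm{SNR}_i^T=\mathrm{SNR}_j^T \quad\text{for all } i,j\in\mathcal P_T, \] i.e., this quantity takes a common value $\mathrm{SNR}^T$.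
   Context: All parameters $N, h_n, g_n, W, \sigma^2, L, D, T, f_B$ are given positive constants, and $n$ ranges over $\{1,\dots,N\}$. The term $t_n W\ln\left(1+\frac{E_n h_n}{t_n\sigma^2W}\right)$ is interpreted as $0$ when $t_n=0$. *)

From HB Require Import structures.
From mathcomp Require Import all_boot all_order all_algebra.
From mathcomp Require Import all_classical all_reals all_analysis.
Set Implicit Arguments. Unset Strict Implicit. Unset Printing Implicit Defensive.
Import Order.TTheory GRing.Theory Num.Theory.
Local Open Scope ring_scope.

Section Defs.
Variables (R : realType) (N : nat).

Definition rate_term (W sigma2 h E t : R) : R :=
  if t == 0 then 0 else t * W * ln (1 + E * h / (t * sigma2 * W)).

Definition objective (h g E : 'I_N -> R) : R :=
  \sum_(n < N) E n * (1 + h n / g n).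

Definition feasible (h : 'I_N -> R) (W sigma2 L T fB d : R)
    (E t : 'I_N -> R) : Prop :=
  [/\ d <= \sum_(n < N) rate_term W sigma2 (h n) (E n) (t n),
      2 * \sum_(n < N) t n <= T - L * d / fB
    & forall n, 0 <= E n /\ 0 <= t n].

Definition optimal (h g : 'I_N -> R) (W sigma2 L T fB d : R)
    (E t : 'I_N -> R) : Prop :=
  feasible h W sigma2 L T fB d E t /\
  forall E' t', feasible h W sigma2 L T fB d E' t' ->
    objective h g E <= objective h g E'.

Definition SNR (W sigma2 h E t : R) : R := E * h / (t * sigma2 * W).
End Defs.

From HB Require Import structures.
From mathcomp Require Import all_boot all_order all_algebra.
From mathcomp Require Import all_classical all_reals all_analysis.
From mathcomp Require Import ring lra.
Import Order.TTheory GRing.Theory Num.Theory.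
Local Open Scope ring_scope.

(* For t > 0 the rate of a channel is W times the perspective
   t ln(1 + x/t) of x |-> ln(1 + x), evaluated at x = E h / (sigma^2 W), and
   the SNR is x/t. The perspective of a strictly concave function is strictly
   superadditive off the rays x/t = const (log-sum inequality), so pooling two
   active channels with different SNRs into a common SNR strictly increases
   their joint rate without using more time. Since the perspective is
   positively homogeneous, shrinking the pooled energies and times by the
   factor lam < 1 that restores the old rate gives a feasible allocation with
   strictly smaller energy cost, contradicting optimality. *)

Section LnBounds.
Context {R : realType}.

Lemma ln_le_subr1 {y : R} : 0 < y -> ln y <= y - 1.
Proof. by move=> y0; have := @le_ln1Dx R (y - 1); rewrite subrKC; apply; lra. Qed.

Lemma ln_lt_subr1 {y : R} : 0 < y -> y != 1 -> ln y < y - 1.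
Proof.
move=> y0 y1; rewrite ltrBrDl -[X in _ < X](lnK (y0 : 0 < y)).
by apply: expR_gt1Dx; rewrite ln_eq0.
Qed.

End LnBounds.

Section PerspectiveLog.
Context {R : realType}.

Definition perspective_log (t x : R) : R := t * ln (1 + x / t).

Lemma perspective_log_gt0 (t x : R) : 0 < t -> 0 < x -> 0 < perspective_log t x.
Proof.
by move=> t0 x0; rewrite mulr_gt0 // ln_gt0 // ltrDl divr_gt0.
Qed.

(* Write 1 + u/p = K y1 and 1 + v/q = K y2 with K the pooled value; then
   p (y1 - 1) + q (y2 - 1) = 0, and ln y <= y - 1 (strict unless y = 1). *)
Lemma perspective_log_ltD {p q u v : R} :
    0 < p -> 0 < q -> 0 < u -> 0 < v -> u / p != v / q ->
  perspective_log p u + perspective_log q v < perspective_log (p + q) (u + v).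
Proof.
move=> p0 q0 u0 v0 uv_neq; rewrite /perspective_log.
set K := 1 + (u + v) / (p + q).
have K0 : 0 < K by rewrite addr_gt0 // divr_gt0 ?addr_gt0.
have K_neq0 : K != 0 by rewrite gt_eqF.
have u1_gt0 : 0 < 1 + u / p by rewrite addr_gt0 // divr_gt0.
have v1_gt0 : 0 < 1 + v / q by rewrite addr_gt0 // divr_gt0.
set y1 := (1 + u / p) / K; set y2 := (1 + v / q) / K.
have y1_gt0 : 0 < y1 by rewrite divr_gt0.
have y2_gt0 : 0 < y2 by rewrite divr_gt0.
have balance : p * (y1 - 1) + q * (y2 - 1) = 0.
  by rewrite /y1 /y2 /K; field; rewrite !gt_eqF ?addr_gt0 //= divr_gt0 ?addr_gt0.
have ln_sum_lt0 : p * ln y1 + q * ln y2 < 0.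
  have [y1_eq1|y1_neq1] := eqVneq y1 1.
    have y2_neq1 : y2 != 1.
      apply: contra uv_neq => /eqP y2_eq1; apply/eqP/(addrI 1).
      by rewrite -[LHS](divfK K_neq0) -[RHS](divfK K_neq0) -/y1 -/y2 y1_eq1 y2_eq1.
    have := ln_lt_subr1 y2_gt0 y2_neq1; rewrite y1_eq1 ln1 in balance *; nra.
  have := ln_lt_subr1 y1_gt0 y1_neq1; have := ln_le_subr1 y2_gt0; nra.
have split_ln (y : R) : 0 < y -> ln y = ln K + ln (y / K).
  by move=> y0; rewrite -lnM ?posrE ?divr_gt0 // mulrC divfK.
by rewrite (split_ln _ u1_gt0) (split_ln _ v1_gt0) -/y1 -/y2; lra.
Qed.

(* Pool at the common ratio (u + v)/(p + q), then shrink everything by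
   lam = old value / pooled value. *)
Lemma perspective_log_pool {p q u v : R} :
    0 < p -> 0 < q -> 0 < u -> 0 < v -> u / p != v / q ->
  exists lam p' q', [/\ 0 < lam < 1, 0 < p', 0 < q', p' + q' <= p + q &
    perspective_log p' (lam * u) + perspective_log q' (lam * v)
      = perspective_log p u + perspective_log q v].
Proof.
move=> p0 q0 u0 v0 uv_neq.
set old := perspective_log p u + perspective_log q v.
set pooled := perspective_log (p + q) (u + v).
have old_gt0 : 0 < old by rewrite addr_gt0 // perspective_log_gt0.
have old_lt : old < pooled by exact: perspective_log_ltD.
have pooled_gt0 : 0 < pooled by exact: lt_trans old_gt0 old_lt.
set lam := old / pooled.
have lam_gt0 : 0 < lam by rewrite divr_gt0.
have lam_lt1 : lam < 1 by rewrite ltr_pdivrMr // mul1r.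
have pq0 : 0 < p + q by rewrite addr_gt0.
have uv0 : 0 < u + v by rewrite addr_gt0.
set c := lam * (p + q) / (u + v).
have c_gt0 : 0 < c by exact: divr_gt0 (mulr_gt0 lam_gt0 pq0) uv0.
have ratio (x : R) : 0 < x -> lam * x / (c * x) = (u + v) / (p + q).
  by move=> x0; rewrite /c; field; rewrite !gt_eqF.
exists lam, (c * u), (c * v); split.
- by rewrite lam_gt0 lam_lt1.
- exact: mulr_gt0 c_gt0 u0.
- exact: mulr_gt0 c_gt0 v0.
- by rewrite -mulrDr /c divfK ?gt_eqF // ger_pMl // ltW.
rewrite /perspective_log !ratio // -mulrDl -mulrDr /c divfK ?gt_eqF //.
by rewrite -mulrA /lam divfK ?gt_eqF.
Qed.

End PerspectiveLog.

Section Update2.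
Context {I : finType} {T : Type}.

Definition update2 (f : I -> T) (i j : I) (x y : T) : I -> T :=
  fun n => if n == i then x else if n == j then y else f n.

Lemma update2_1 f i j x y : update2 f i j x y i = x.
Proof. by rewrite /update2 eqxx. Qed.

Lemma update2_2 f i j x y : i != j -> update2 f i j x y j = y.
Proof. by move=> ij; rewrite /update2 eq_sym (negbTE ij) eqxx. Qed.

Lemma update2_other f i j x y n :
  n != i -> n != j -> update2 f i j x y n = f n.
Proof. by move=> ni nj; rewrite /update2 (negbTE ni) (negbTE nj). Qed.

End Update2.

Lemma sum_agree_off2 {I : finType} {V : zmodType} (F G : I -> V) {i j : I} :
    i != j -> (forall n, n != i -> n != j -> G n = F n) ->
  \sum_n G n - (G i + G j) = \sum_n F n - (F i + F j).
Proof.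
move=> ij GF; have ji : j != i by rewrite eq_sym.
rewrite [in RHS](bigD1 i) // (bigD1 j) //= [in LHS](bigD1 i) // (bigD1 j) //=.
under eq_bigr => n /andP[ni nj] do rewrite GF //.
by rewrite !addrA ![_ + _ + _ - _]addrC !addKr.
Qed.

Lemma SNR_gainE {R : realType} (W sigma2 h En tn : R) :
  SNR W sigma2 h En tn = En * (h / (sigma2 * W)) / tn.
Proof. by rewrite /SNR !invfM; ring. Qed.

Lemma rate_term_perspective {R : realType} (W sigma2 h En tn : R) : tn != 0 ->
  rate_term W sigma2 h En tn = W * perspective_log tn (En * (h / (sigma2 * W))).
Proof.
move=> tn0; rewrite /rate_term (negbTE tn0) -[_ / (_ * _ * _)]/(SNR _ _ _ _ _).
by rewrite SNR_gainE /perspective_log [RHS]mulrA [W * tn]mulrC.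
Qed.

Section Allocation.
Context {R : realType} {N : nat} {h g : 'I_N -> R} {W sigma2 L T fB d : R}.
Hypotheses (Hh : forall n, 0 < h n) (Hg : forall n, 0 < g n).
Hypotheses (HW : 0 < W) (Hs : 0 < sigma2).

Lemma unequal_SNR_improvable {E t : 'I_N -> R} {i j : 'I_N} :
    feasible h W sigma2 L T fB d E t -> i != j ->
    0 < E i -> 0 < t i -> 0 < E j -> 0 < t j ->
    SNR W sigma2 (h i) (E i) (t i) != SNR W sigma2 (h j) (E j) (t j) ->
  exists E' t', feasible h W sigma2 L T fB d E' t' /\
    objective h g E' < objective h g E.
Proof.
move=> [rate_ok time_ok nonneg] ij Ei0 ti0 Ej0 tj0.
rewrite !SNR_gainE => snr_neq.
have gain_gt0 n : 0 < h n / (sigma2 * W) by rewrite divr_gt0 ?mulr_gt0.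
have [lam [p' [q' [/andP[lam_gt0 lam_lt1] p'_gt0 q'_gt0 time_le rate_eq]]]] :=
  perspective_log_pool ti0 tj0 (mulr_gt0 Ei0 (gain_gt0 i))
    (mulr_gt0 Ej0 (gain_gt0 j)) snr_neq.
set E' := update2 E i j (lam * E i) (lam * E j).
set t' := update2 t i j p' q'.
have E'i : E' i = lam * E i by exact: update2_1.
have E'j : E' j = lam * E j by exact: update2_2.
have t'i : t' i = p' by exact: update2_1.
have t'j : t' j = q' by exact: update2_2.
have agree_off2 (F : 'I_N -> R -> R -> R) n :
    n != i -> n != j -> F n (E' n) (t' n) = F n (E n) (t n).
  by move=> ni nj; rewrite /E' /t' !update2_other.
exists E', t'; split; first split.
- have := sum_agree_off2 _ _ ij (agree_off2 (fun n => rate_term W sigma2 (h n))).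
  rewrite /= E'i E'j t'i t'j !rate_term_perspective ?gt_eqF //.
  rewrite -!mulrA -!mulrDr rate_eq; lra.
- have := sum_agree_off2 _ _ ij (agree_off2 (fun _ _ tn => tn)).
  rewrite /= t'i t'j; lra.
- move=> n; have [->|ni] := eqVneq n i.
    by rewrite E'i t'i mulr_ge0 ?ltW.
  have [->|nj] := eqVneq n j; first by rewrite E'j t'j mulr_ge0 ?ltW.
  by rewrite (agree_off2 (fun _ En _ => En)) ?(agree_off2 (fun _ _ tn => tn)).
- have := sum_agree_off2 _ _ ij
    (agree_off2 (fun n En _ => En * (1 + h n / g n))).
  rewrite /objective /= E'i E'j -!mulrA.
  have cost_gt0 n : 0 < E n -> 0 < E n * (1 + h n / g n).
    by move=> En0; rewrite mulr_gt0 ?addr_gt0 ?divr_gt0.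
  have shrink (x : R) : 0 < x -> lam * x < x by move=> x0; rewrite gtr_pMl.
  have := shrink _ (cost_gt0 i Ei0); have := shrink _ (cost_gt0 j Ej0); lra.
Qed.

End Allocation.

Theorem lemma2 (R : realType) (N : nat) (h g : 'I_N -> R)
    (W sigma2 L D T fB : R)
    (HN : (0 < N)%N) (Hh : forall n, 0 < h n) (Hg : forall n, 0 < g n)
    (HW : 0 < W) (Hs : 0 < sigma2) (HL : 0 < L) (HD : 0 < D)
    (HT : 0 < T) (HfB : 0 < fB)
    (d : R) (Hd0 : 0 <= d) (HdD : d <= D)
    (E t : 'I_N -> R)
    (Hopt : optimal h g W sigma2 L T fB d E t)
    (Hsupp : forall n, (E n = 0 /\ t n = 0) \/ (0 < E n /\ 0 < t n)) :
  forall i j : 'I_N, 0 < E i -> 0 < t i -> 0 < E j -> 0 < t j ->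
    SNR W sigma2 (h i) (E i) (t i) = SNR W sigma2 (h j) (E j) (t j).
Proof.
move=> i j Ei0 ti0 Ej0 tj0; case: Hopt => feas minimal.
have [<-|ij] := eqVneq i j; first by [].
apply/eqP; apply: contraT => snr_neq.
have [E' [t' [feas' better]]] :=
  unequal_SNR_improvable Hh Hg HW Hs feas ij Ei0 ti0 Ej0 tj0 snr_neq.
by have := minimal E' t' feas'; rewrite leNgt better.
Qed.
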